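(* For any frozen activation pattern $R$, the unique harmonic extension of the boundary data satisfies $z^{(\ell)*} = \overline{W}^{(\ell)}\overline{a}^{(\ell-1)*}$ and $a^{(\ell)*} = R^{(\ell)}\,z^{(\ell)*}$ for all layers, with $\hat{y}^* = z^{(k+1)*}$. In particular, when $\overline{\mathbf{a}}^{(0)}$ is fixed to $\overline{\mathbf{x}}$, only the forward-pass activation pattern (i.e. $\mathbf{z}^{(\ell)}=W^{(\ell)}\mathbf{a}^{(\ell-1)}+b^{(\ell)}$, $\mathbf{a}^{(\ell)}=\mathrm{ReLU}(\mathbf{z}^{(\ell)})$) produces a harmonic extension that is also a global section.
   Context: Consider a feedforward ReLU network with $k$ hidden layers, widths $n_0,\dots,n_{k+1}$, weights $W^{(\ell)}$, biases $b^{(\ell)}$, identity output activation. Define $\overline{W}^{(\ell)} = (W^{(\ell)}\mid \mathrm{diag}(b^{(\ell)}))$, $\overline{a}^{(\ell)} = (a^{(\ell)}, \mathbf{1}_{n_{\ell+1}})$, $\overline{a}^{(0)}=\overline{\mathbf{x}}=(\mathbf{x},\mathbf{1}_{n_1})$. A cellular sheaf is built on the path graph $v_x - v_{z^{(1)}} - v_{a^{(1)}} - \cdots - v_{a^{(k)}} - v_{z^{(k+1)}} - v_y$; writing $\mathcal{F}_{v,e}$ for the restriction map from vertex $v$ to incident edge $e$, the weight edge from $v_{a^{(\ell-1)}}$ to $v_{z^{(\ell)}}$ has maps $\overline{W}^{(\ell)}$ and $I$, the activation edge from $v_{z^{(\ell)}}$ to $v_{a^{(\ell)}}$ has maps $R^{(\ell)}$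 (diagonal $0/1$) and the projection $P_{n_\ell}=(I_{n_\ell}\ 0)$, and the output edge from $v_{z^{(k+1)}}$ to $v_y$ has maps $I$ and $I$. The coboundary is $(\delta x)_e=\mathcal{F}_{v,e}x_v-\mathcal{F}_{u,e}x_u$ for $e=u\to v$. The boundary data $u$ consists of the input stalk at $v_x$ and the ones blocks in each $v_{a^{(\ell)}}$ stalk; the free coordinates are $\omega=(z^{(1)},a^{(1)},\dots,z^{(k+1)},\hat y)$. The harmonic extension is the minimizer of $\|\delta\overline{\omega}\|^2$ over $\omega$ with the boundary data fixed; it is unique because the restricted coboundary $\delta_\Omega$ is unitriangular (determinant 1). In the actual (state-dependent) sheaf, $R^{(\ell)}_{jj}=1$ iff the current $z^{(\ell)}_j\ge 0$; a global section is a cochain with $\delta\overline{\omega}=0$. Uniqueness of the self-consistent pattern assumes no pre-activation coordinate vanishes (a generic condition in the weights). *)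

From mathcomp Require Import all_boot all_order all_algebra.
Set Implicit Arguments. Unset Strict Implicit. Unset Printing Implicit Defensive.
Import Order.TTheory GRing.Theory Num.Theory.
Local Open Scope ring_scope.

(* Network: widths n 0, ..., n (k+1); weight edge l (l = 0..k) carries
   W^(l+1) = W l : n(l+1) x n(l) and b^(l+1) = b l. Values of W, b, n beyond
   index k are never used. *)

Section Sheaf.
Variable R : realFieldType.
Variable n : nat -> nat.
Variable k : nat.

Definition Wbar (W : forall l : nat, 'M[R]_(n l.+1, n l))
  (b : forall l : nat, 'cV[R]_(n l.+1)) (l : nat) : 'M[R]_(n l.+1, n l + n l.+1) :=
  row_mx (W l) (diag_mx (b l)^T).

Definition Pproj (p q : nat) : 'M[R]_(p, p + q) := row_mx 1%:M 0.

Definition Rmat (m : nat) (r : 'I_m -> bool) : 'M[R]_m := diag_mx (\row_j (r j)%:R).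

Definition ordSucc (i : 'I_k) : 'I_k.+1 := @Ordinal k.+1 i.+1 (ltn_ord i).
Definition ordW (i : 'I_k) : 'I_k.+1 := widen_ord (leqnSn k) i.

(* Cochains on the vertices of the path graph
   v_x - v_z1 - v_a1 - ... - v_ak - v_z(k+1) - v_y :
   va 0 is the stalk at v_x (= xbar), va i (1<=i<=k) the stalk at v_{a^(i)}
   (= abar^(i) in R^{n_i + n_{i+1}}); vz i is the stalk at v_{z^(i+1)};
   vy the stalk at v_y. *)
Record cochain := Cochain {
  va : forall i : 'I_k.+1, 'cV[R]_(n i + n i.+1);
  vz : forall i : 'I_k.+1, 'cV[R]_(n i.+1);
  vy : 'cV[R]_(n k.+1) }.

(* frozen activation pattern: R^{(i+1)} for i < k *)
Definition pattern := forall i : 'I_k, 'I_(n i.+1) -> bool.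

Section Cob.
Variable W : forall l : nat, 'M[R]_(n l.+1, n l).
Variable b : forall l : nat, 'cV[R]_(n l.+1).

(* (delta x)_e = F_{v,e} x_v - F_{u,e} x_u for e = u -> v *)
(* weight edge v_{a^(i)} -> v_{z^(i+1)} *)
Definition weight_cob (c : cochain) (i : 'I_k.+1) : 'cV[R]_(n i.+1) :=
  1%:M *m vz c i - Wbar W b i *m va c i.
(* activation edge v_{z^(i+1)} -> v_{a^(i+1)} *)
Definition act_cob (r : pattern) (c : cochain) (i : 'I_k) : 'cV[R]_(n i.+1) :=
  Pproj (n i.+1) (n i.+2) *m va c (ordSucc i) - Rmat (r i) *m vz c (ordW i).
(* output edge v_{z^(k+1)} -> v_y *)
Definition out_cob (c : cochain) : 'cV[R]_(n k.+1) :=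
  1%:M *m vy c - 1%:M *m vz c ord_max.

Definition sqnorm (m : nat) (v : 'cV[R]_m) : R := \sum_(j < m) v j 0 ^+ 2.

Definition energy (r : pattern) (c : cochain) : R :=
  \sum_(i < k.+1) sqnorm (weight_cob c i)
  + \sum_(i < k) sqnorm (act_cob r c i) + sqnorm (out_cob c).

Definition boundary (x : 'cV[R]_(n 0%N)) (c : cochain) : Prop :=
  usubmx (va c ord0) = x /\ forall i : 'I_k.+1, dsubmx (va c i) = const_mx 1.

Definition harmonic_ext (x : 'cV[R]_(n 0%N)) (r : pattern) (c : cochain) : Prop :=
  boundary x c /\ forall c', boundary x c' -> energy r c <= energy r c'.

Definition global_section (r : pattern) (c : cochain) : Prop :=
  (forall i, weight_cob c i = 0) /\ (forall i, act_cob r c i = 0) /\ out_cob c = 0.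

Definition state_pattern (c : cochain) : pattern :=
  fun i j => 0 <= vz c (ordW i) j 0.

Definition relu (m : nat) (v : 'cV[R]_m) : 'cV[R]_m := map_mx (fun t => Num.max t 0) v.

(* forward pass: fwd_a x l = a^(l), fwd_z x l = z^(l+1) *)
Fixpoint fwd_a (x : 'cV[R]_(n 0%N)) (l : nat) : 'cV[R]_(n l) :=
  match l return 'cV[R]_(n l) with
  | 0 => x
  | l'.+1 => relu (W l' *m fwd_a x l' + b l')
  end.
Definition fwd_z (x : 'cV[R]_(n 0%N)) (l : nat) : 'cV[R]_(n l.+1) :=
  W l *m fwd_a x l + b l.

Definition fwd_pattern (x : 'cV[R]_(n 0%N)) : pattern :=
  fun i j => 0 <= fwd_z x i j 0.

End Cob.
End Sheaf.

Arguments fwd_pattern {R n k} W b x i j.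
Arguments state_pattern {R n k} c i j.

(* The energy is a sum of squares of the coboundary, so once some cochain with
   the boundary data has zero energy, the harmonic extensions are exactly the
   global sections with that boundary data.  For a frozen pattern the section
   equations z = Wbar abar, a = R z, yhat = z are solved layer by layer from
   the input, giving exactly one such cochain: the frozen forward pass.  For
   the state-dependent pattern the equation a = R z reads a = ReLU z, so the
   frozen pass is then the ReLU forward pass; since no forward pre-activation
   vanishes, the pattern can be read back from z, forcing R to be the
   forward-pass pattern. *)

From mathcomp Require Import all_boot all_order all_algebra.
From Stdlib Require Import FunctionalExtensionality.
Import Order.TTheory GRing.Theory Num.Theory.
Local Open Scope ring_scope.
Set Implicit Arguments. Unset Strict Implicit.

Section Matrices.
Variable R : realFieldType.

Lemma sqnorm_ge0 m (v : 'cV[R]_m) : 0 <= sqnorm v.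
Proof. by apply: sumr_ge0 => i _; apply: sqr_ge0. Qed.

Lemma sqnorm_eq0 m (v : 'cV[R]_m) : (sqnorm v == 0) = (v == 0).
Proof.
apply/eqP/eqP => [v0 | ->]; last by rewrite /sqnorm big1 // => i _; rewrite mxE expr0n.
apply/matrixP => i j; rewrite ord1 mxE; apply/eqP; rewrite -sqrf_eq0; apply/eqP.
exact: (psumr_eq0P (fun i _ => sqr_ge0 (v i 0)) v0).
Qed.

Lemma sum_sqnorm_ge0 p (m : 'I_p -> nat) (f : forall i, 'cV[R]_(m i)) :
  0 <= \sum_(i < p) sqnorm (f i).
Proof. by apply: sumr_ge0 => i _; apply: sqnorm_ge0. Qed.

Lemma sum_sqnorm_eq0 p (m : 'I_p -> nat) (f : forall i, 'cV[R]_(m i)) :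
  (\sum_(i < p) sqnorm (f i) == 0) = [forall i, f i == 0].
Proof.
rewrite psumr_eq0 => [|i _]; last exact: sqnorm_ge0.
apply/allP/forallP => [f0 i | f0 i _]; last by rewrite sqnorm_eq0 f0.
by rewrite -sqnorm_eq0; apply: f0; apply: mem_index_enum.
Qed.

Lemma mul_Pproj p q (v : 'cV[R]_(p + q)) : Pproj R p q *m v = usubmx v.
Proof. by rewrite /Pproj -{1}(vsubmxK v) mul_row_col mul1mx mul0mx addr0. Qed.

Lemma eq_Rmat m (r s : 'I_m -> bool) : r =1 s -> Rmat R r = Rmat R s.
Proof. by move=> rs; apply/matrixP => i j; rewrite !mxE rs. Qed.

Lemma relu_Rmat m (z : 'cV[R]_m) : Rmat R (fun j => 0 <= z j 0) *m z = relu z.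
Proof.
apply/matrixP => i j; rewrite ord1 /Rmat mul_diag_mx !mxE.
by case: (lerP 0 (z i 0)) => _; rewrite ?mul1r ?mul0r.
Qed.

Lemma Rmat_mul_inj m (r s : 'I_m -> bool) (z : 'cV[R]_m) :
  (forall j, z j 0 != 0) -> Rmat R r *m z = Rmat R s *m z -> r =1 s.
Proof.
move=> z_neq0 /matrixP rs j; move: (rs j 0); rewrite /Rmat !mul_diag_mx !mxE.
by move/(mulIf (z_neq0 j))/eqP; rewrite eqr_nat; case: (r j) (s j) => -[].
Qed.

End Matrices.

Section Sheaf.
Variables (R : realFieldType) (n : nat -> nat) (k : nat).
Variables (W : forall l : nat, 'M[R]_(n l.+1, n l)) (b : forall l : nat, 'cV[R]_(n l.+1)).
Variable x : 'cV[R]_(n 0%N).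

Lemma Wbar_mul l (v : 'cV[R]_(n l + n l.+1)) : dsubmx v = const_mx 1 ->
  Wbar W b l *m v = W l *m usubmx v + b l.
Proof.
move=> ones; rewrite /Wbar -{1}(vsubmxK v) mul_row_col ones; congr (_ + _).
by apply/matrixP => i j; rewrite ord1 mul_diag_mx !mxE mulr1.
Qed.

Definition layer_eqs (r : pattern n k) (c : cochain R n k) : Prop :=
  (forall i : 'I_k.+1, vz c i = Wbar W b i *m va c i) /\
  (forall i : 'I_k, usubmx (va c (ordSucc i)) = Rmat R (r i) *m vz c (ordW i)) /\
  vy c = vz c ord_max.

Lemma global_sectionP (r : pattern n k) (c : cochain R n k) :
  global_section W b r c <-> layer_eqs r c.
Proof.
rewrite /global_section /layer_eqs /weight_cob /act_cob /out_cob.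
split=> [[wc [ac oc]] | [wc [ac oc]]]; split=> [i|]; try split=> [i|].
- by apply/eqP; rewrite -subr_eq0 -(mul1mx (vz c i)) wc.
- by apply/eqP; rewrite -subr_eq0 -mul_Pproj ac.
- by apply/eqP; rewrite -subr_eq0 -(mul1mx (vy c)) -(mul1mx (vz c _)) oc.
- by rewrite mul1mx wc subrr.
- by rewrite mul_Pproj ac subrr.
- by rewrite !mul1mx oc subrr.
Qed.

Lemma energy_ge0 (r : pattern n k) (c : cochain R n k) : 0 <= energy W b r c.
Proof. by rewrite /energy !addr_ge0 ?sqnorm_ge0 ?sum_sqnorm_ge0. Qed.

Lemma energy_eq0 (r : pattern n k) (c : cochain R n k) :
  energy W b r c = 0 <-> global_section W b r c.
Proof.
rewrite /energy /global_section; split=> [/eqP | [wc [ac oc]]]; last first.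
  apply/eqP; rewrite !paddr_eq0 ?addr_ge0 ?sqnorm_ge0 ?sum_sqnorm_ge0 //.
  by rewrite !sum_sqnorm_eq0 sqnorm_eq0 oc eqxx andbT; apply/andP; split;
    apply/forallP => i; rewrite ?wc ?ac.
rewrite !paddr_eq0 ?addr_ge0 ?sqnorm_ge0 ?sum_sqnorm_ge0 //.
rewrite !sum_sqnorm_eq0 sqnorm_eq0 => /andP[/andP[/forallP wc /forallP ac] /eqP oc].
by split=> [i|]; [|split=> [i|//]]; apply/eqP.
Qed.

Lemma harmonic_ext_global_section (r : pattern n k) (c : cochain R n k) :
  (exists c0, boundary x c0 /\ global_section W b r c0) ->
  harmonic_ext W b x r c <-> boundary x c /\ global_section W b r c.
Proof.
move=> [c0 [bc0 gc0]]; split=> [[bc min_c] | [bc gc]]; split=> //.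
  apply/energy_eq0/le_anti; rewrite energy_ge0 andbT.
  by rewrite -((energy_eq0 r c0).2 gc0) min_c.
by move=> c' _; rewrite (energy_eq0 r c).2 // energy_ge0.
Qed.

Section FrozenPass.
Unset Implicit Arguments.
Variable r : pattern n k.

(* [r] read at a natural index; junk [false] beyond the hidden layers. *)
Definition pattern_at (l : nat) : 'I_(n l.+1) -> bool :=
  match ltnP l k with
  | LtnNotGeq lt_lk => r (Ordinal lt_lk)
  | GeqNotLtn _ => fun _ => false
  end.

Lemma pattern_atE (i : 'I_k) : pattern_at i = r i.
Proof.
case: i => i lt_ik; rewrite /pattern_at; case: ltnP => [lt_ik' | ].
  by rewrite (bool_irrelevance lt_ik' lt_ik).
by rewrite leqNgt lt_ik.
Qed.

Fixpoint frozen_a (l : nat) : 'cV[R]_(n l) :=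
  match l return 'cV[R]_(n l) with
  | 0 => x
  | l'.+1 => Rmat R (pattern_at l') *m (W l' *m frozen_a l' + b l')
  end.

Definition frozen_z (l : nat) : 'cV[R]_(n l.+1) := W l *m frozen_a l + b l.

Definition frozen_cochain : cochain R n k :=
  Cochain (fun i : 'I_k.+1 => col_mx (frozen_a i) (const_mx 1))
          (fun i : 'I_k.+1 => frozen_z i) (frozen_z k).

Set Implicit Arguments.

Lemma frozen_cochain_boundary : boundary x frozen_cochain.
Proof. by split=> [|i] /=; rewrite ?col_mxKu ?col_mxKd. Qed.

Lemma frozen_cochain_layer_eqs : layer_eqs r frozen_cochain.
Proof.
split=> [i|]; last split=> [i|//] /=.
  by rewrite Wbar_mul ?col_mxKu ?col_mxKd.
by rewrite col_mxKu /= pattern_atE.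
Qed.

Lemma layer_eqs_frozen c : boundary x c -> layer_eqs r c -> c = frozen_cochain.
Proof.
move=> [input ones] [wc [ac oc]].
have va_eq (i : 'I_k.+1) : va c i = col_mx (frozen_a i) (const_mx 1).
  case: i => l; elim: l => [|l IH] lt_lk; rewrite -(vsubmxK (va c _)) ones.
    by rewrite (_ : Ordinal lt_lk = ord0) ?input //; apply: val_inj.
  have lt_lk' : (l < k)%N := lt_lk.
  rewrite (_ : Ordinal lt_lk = ordSucc (Ordinal lt_lk')); last exact: val_inj.
  by rewrite ac wc /= IH /= Wbar_mul ?col_mxKu ?col_mxKd ?(pattern_atE (Ordinal lt_lk')).
have vz_eq (i : 'I_k.+1) : vz c i = frozen_z i.
  by rewrite wc va_eq Wbar_mul ?col_mxKu ?col_mxKd.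
case: c va_eq vz_eq oc {input ones wc ac} => a z y /= va_eq vz_eq ->.
by rewrite vz_eq /frozen_cochain; congr Cochain; apply: functional_extensionality_dep.
Qed.

Lemma harmonic_ext_frozen c : harmonic_ext W b x r c <-> c = frozen_cochain.
Proof.
have gc0 : global_section W b r frozen_cochain.
  exact/global_sectionP/frozen_cochain_layer_eqs.
have bc0 := frozen_cochain_boundary.
apply: iff_trans (harmonic_ext_global_section c _) _; first by exists frozen_cochain.
by split=> [[bc /global_sectionP] | ->]; first exact: layer_eqs_frozen.
Qed.

Lemma frozen_layer_eqsP s :
  layer_eqs s frozen_cochain <->
  forall i : 'I_k, Rmat R (r i) *m frozen_z i = Rmat R (s i) *m frozen_z i.
Proof.
have [wc [ac oc]] := frozen_cochain_layer_eqs.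
split=> [[_ [ac' _]] i | rs]; first by rewrite -ac ac'.
by split=> //; split=> // i; rewrite ac rs.
Qed.

Lemma frozen_z_fwd :
  (forall i : 'I_k, frozen_z i = fwd_z W b x i ->
     Rmat R (r i) *m frozen_z i = relu (frozen_z i)) ->
  forall l, (l <= k)%N -> frozen_z l = fwd_z W b x l.
Proof.
move=> relu_r; suff frozen_a_fwd l : (l <= k)%N -> frozen_a l = fwd_a W b x l.
  by move=> l /frozen_a_fwd; rewrite /frozen_z /fwd_z => ->.
elim: l => [//|l IH] lt_lk.
have ez : frozen_z l = fwd_z W b x l by rewrite /frozen_z IH // ltnW.
change (Rmat R (pattern_at l) *m frozen_z l = relu (fwd_z W b x l)).
by rewrite (pattern_atE (Ordinal lt_lk)) -ez; exact: relu_r (Ordinal lt_lk) ez.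
Qed.

End FrozenPass.
End Sheaf.

Arguments frozen_z {R n k} W b x r l.
Arguments frozen_cochain {R n k} W b x r.

Theorem proposition3p4 (R : realFieldType) (n : nat -> nat) (k : nat)
  (W : forall l : nat, 'M[R]_(n l.+1, n l)) (b : forall l : nat, 'cV[R]_(n l.+1))
  (x : 'cV[R]_(n 0%N)) :
  (forall r : pattern n k,
     (exists c, harmonic_ext W b x r c) /\
     (forall c c', harmonic_ext W b x r c -> harmonic_ext W b x r c' -> c = c') /\
     (forall c, harmonic_ext W b x r c ->
        (forall i : 'I_k.+1, vz c i = Wbar W b i *m va c i) /\
        (forall i : 'I_k, usubmx (va c (ordSucc i)) = Rmat R (r i) *m vz c (ordW i)) /\
        vy c = vz c ord_max))
  /\
  ((forall (i : 'I_k) (j : 'I_(n i.+1)), fwd_z W b x i j 0 != 0) ->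
   forall (r : pattern n k) (c : cochain R n k), harmonic_ext W b x r c ->
     (global_section W b (state_pattern c) c <->
      forall (i : 'I_k) (j : 'I_(n i.+1)), r i j = fwd_pattern W b x i j)).
Proof.
split=> [r | fwd_z_neq0 r c /harmonic_ext_frozen ->].
  split; first by exists (frozen_cochain W b x r); apply/harmonic_ext_frozen.
  split=> [c c' /harmonic_ext_frozen -> /harmonic_ext_frozen -> // | c].
  by move/harmonic_ext_frozen ->; exact: frozen_cochain_layer_eqs.
have state_relu (i : 'I_k) :
  Rmat R (state_pattern (frozen_cochain W b x r) i) *m frozen_z W b x r i
  = relu (frozen_z W b x r i) := relu_Rmat _.
have fwd_relu (i : 'I_k) :
  Rmat R (fwd_pattern W b x i) *m fwd_z W b x i = relu (fwd_z W b x i) := relu_Rmat _.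
split=> [/global_sectionP/frozen_layer_eqsP r_relu i | r_fwd].
  have ez := frozen_z_fwd (fun i _ => etrans (r_relu i) (state_relu i)).
  apply: (Rmat_mul_inj (fwd_z_neq0 i)); rewrite fwd_relu -(ez i (ltnW (ltn_ord i))).
  by rewrite r_relu state_relu.
have ez : forall l, (l <= k)%N -> frozen_z W b x r l = fwd_z W b x l.
  by apply: frozen_z_fwd => i ->; rewrite (eq_Rmat _ (r_fwd i)).
apply/global_sectionP/frozen_layer_eqsP => i.
by rewrite (eq_Rmat _ (r_fwd i)) state_relu (ez i (ltnW (ltn_ord i))) fwd_relu.
Qed.
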